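(* Let $k\ge1$, let $p,q_1,\dots,q_k$ be primes with $p<q_1<\cdots<q_k$, and let $a$ be a positive integer. If $p^{a-2}>q_1\cdots q_{k-1}q_k^2$, then $p^a$ reduces to $p^bq_1\cdots q_k$, where $$b=\left\lfloor\frac12\left(a-\frac{\log(q_1\cdots q_{k-1})}{\log p}\right)\right\rfloor$$ (the empty product being $1$).
   Context: For a positive integer $n$, $\mathcal{D}(n)$ is the set of positive divisors of $n$, and $\lambda(n)$ is the least prime factor of $n$ if $n\ge2$, with $\lambda(1)=1$. For positive integers $m,n$, a function $f:\mathcal{D}(n)\to\mathcal{D}(m)$ is called reducing if for all $d,d'\in\mathcal{D}(n)$: (a) $f(d)\le d$; (b) $\frac{m/f(d)}{n/d}\le\min\{1,\ \lambda(m/f(d))/\lambda(n/d)\}$; (c) if $f(d)=2^if(d')$ for some $i\in\mathbb{Z}$, then $d=2^jd'$ for some $j\in\mathbb{Z}$. We say $n$ reduces to $m$ if a reducing function $\mathcal{D}(n)\to\mathcal{D}(m)$ exists. *)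

From Stdlib Require Import Reals ZArith.
From mathcomp Require Import all_boot all_order all_algebra.
Set Implicit Arguments. Unset Strict Implicit. Unset Printing Implicit Defensive.
Import Order.TTheory GRing.Theory Num.Theory.

Definition lam (n : nat) : nat := if (2 <= n)%N then pdiv n else 1%N.

Local Open Scope ring_scope.

(* f : D(n) -> D(m) is represented by a function on nat, constrained on the
   positive divisors d of n (n > 0 in all uses, so divisors are positive). *)
Definition reducing (n m : nat) (f : nat -> nat) : Prop :=
  (forall d, (d %| n)%N -> (f d %| m)%N) /\
  (forall d, (d %| n)%N -> (f d <= d)%N) /\
  (forall d, (d %| n)%N ->
     ((m %/ f d)%N%:R / (n %/ d)%N%:R : rat)
       <= Num.min 1 ((lam (m %/ f d))%:R / (lam (n %/ d))%:R)) /\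
  (forall d d', (d %| n)%N -> (d' %| n)%N ->
     (exists i : int, ((f d)%:R : rat) = (2 : rat) ^ i * (f d')%:R) ->
     (exists j : int, (d%:R : rat) = (2 : rat) ^ j * d'%:R)).

Definition reduces (n m : nat) : Prop := exists f : nat -> nat, reducing n m f.

(* p^(a-2) > X, with a possibly < 2 (computed in Q with integer exponent) *)
Definition pow_gt (p a X : nat) : Prop :=
  (X%:R : rat) < (p%:R : rat) ^ (a%:Z - 2%:Z).

Local Close Scope ring_scope.

Definition bexp (a p P : nat) : Z :=
  Int_part (Rdiv (Rminus (INR a) (Rdiv (ln (INR P)) (ln (INR p)))) (IZR 2)).

(* The divisors of p^a are the p^j, j <= a, and b is the largest integer with
   p^(2b) R <= p^a, where R = q_1 ... q_(k-1).  Put Q_l = q_1 ... q_l, let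
   c_l = ceil (log_p Q_l) for l < k and c_k = a - b, and send p^j to
   p^(j - c_l) Q_l with l maximal such that c_l <= j.  This is a divisor of
   m = p^b Q_k between m / p^(a-j) and p^j whose cofactor has no prime factor
   below p, which gives (a) and (b).  Unique factorisation recovers l and
   j - c_l, hence j, from the image, and the image is odd when p is, which
   gives (c).  The hypothesis p^(a-2) > R q_k^2 yields q_k < p^b and
   p^(b+1) Q_k < p^a: the first makes consecutive c_l differ by at most b + 1,
   so that j - c_l <= b, the second gives the lower bound m / p^(a-j). *)

From Stdlib Require Import ZArith Reals Lra.
From mathcomp Require Import all_boot all_order all_algebra ring zify.

Set Implicit Arguments. Unset Strict Implicit. Unset Printing Implicit Defensive.

Section RealLogarithms.
Local Open Scope R_scope.

Lemma INR_expn m n : INR (m ^ n)%N = INR m ^ n.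
Proof. by elim: n => [|n IHn]; rewrite ?expn0 // expnS -multE mult_INR IHn. Qed.

Lemma ln_INR_lt x y : (0 < x < y)%N -> ln (INR x) < ln (INR y).
Proof.
by case/andP=> /ltP/lt_0_INR x_gt0 /ltP/lt_INR; apply: ln_increasing.
Qed.

Lemma ln_INR_le x y : (0 < x <= y)%N -> ln (INR x) <= ln (INR y).
Proof.
case/andP=> x_gt0; rewrite leq_eqVlt => /orP[/eqP-> | xy]; first exact: Rle_refl.
by apply/Rlt_le/ln_INR_lt; rewrite x_gt0.
Qed.

Lemma ln_INR_expnM p n x : (0 < p)%N -> (0 < x)%N ->
  ln (INR (p ^ n * x)) = INR n * ln (INR p) + ln (INR x).
Proof.
move=> /ltP/lt_0_INR p_gt0 /ltP/lt_0_INR x_gt0.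
by rewrite -multE mult_INR INR_expn ln_mult ?ln_pow //; apply: pow_lt.
Qed.

Lemma bexp_eq a p P b : (1 < p)%N -> (0 < P)%N ->
  (p ^ (2 * b) * P <= p ^ a)%N -> (p ^ a < p ^ (2 * b.+1) * P)%N ->
  bexp a p P = Z.of_nat b.
Proof.
move=> p_gt1 P_gt0 lb ub.
have p_gt0 : (0 < p)%N := ltnW p_gt1.
have lnp_gt0 : 0 < ln (INR p).
  by rewrite -ln_1; apply: ln_increasing; [lra | exact/lt_1_INR/ltP].
have lnpa : ln (INR (p ^ a)) = INR a * ln (INR p).
  by rewrite -[(p ^ a)%N]muln1 ln_INR_expnM // ln_1 Rplus_0_r.
have {}lb : INR (2 * b) * ln (INR p) + ln (INR P) <= INR a * ln (INR p).
  rewrite -ln_INR_expnM // -lnpa; apply: ln_INR_le.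
  by rewrite muln_gt0 expn_gt0 p_gt0 P_gt0.
have {}ub : INR a * ln (INR p) < INR (2 * b.+1) * ln (INR p) + ln (INR P).
  by rewrite -ln_INR_expnM // -lnpa; apply: ln_INR_lt; rewrite expn_gt0 p_gt0.
rewrite /bexp; set t := ln (INR P) / ln (INR p).
have lnP : ln (INR P) = t * ln (INR p).
  by rewrite /t /Rdiv Rmult_assoc Rinv_l ?Rmult_1_r //; lra.
have INR_double n : INR (2 * n) = 2 * INR n by rewrite -multE mult_INR /=; lra.
rewrite lnP INR_double in lb; rewrite lnP INR_double S_INR in ub.
have {}lb : 2 * INR b + t <= INR a by apply: (Rmult_le_reg_r (ln (INR p))); lra.
have {}ub : INR a < 2 * (INR b + 1) + t by apply: (Rmult_lt_reg_r (ln (INR p))); lra.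
symmetry; apply: Int_part_spec; rewrite -INR_IZR_INZ; lra.
Qed.
End RealLogarithms.

Import Order.TTheory GRing.Theory Num.Theory.

Lemma lam_gt0 n : 0 < lam n.
Proof. by rewrite /lam; case: ifP; rewrite ?pdiv_gt0. Qed.

Lemma lam_pfactor p n : prime p -> lam (p ^ n.+1) = p.
Proof.
move=> p_pr; have p_gt1 := prime_gt1 p_pr.
have pn_gt1 : 1 < p ^ n.+1 by rewrite -(expn0 p) ltn_exp2l.
by rewrite /lam pn_gt1 pdiv_pfactor.
Qed.

Lemma lam_ge p e : 1 < e -> (forall r, prime r -> r %| e -> p <= r) -> p <= lam e.
Proof. by move=> e_gt1 minp; rewrite /lam e_gt1 minp ?pdiv_prime ?pdiv_dvd. Qed.

Local Open Scope ring_scope.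

Lemma ratio_le_min (e N le lN : nat) : (0 < N)%N -> (0 < lN)%N -> (e <= N)%N ->
  (e * lN <= le * N)%N -> (e%:R / N%:R : rat) <= Num.min 1 (le%:R / lN%:R).
Proof.
move=> N_gt0 lN_gt0 eN elN; rewrite le_min !ler_pdivrMr ?ltr0n // mul1r ler_nat eN.
by rewrite mulrAC ler_pdivlMr ?ltr0n // -!natrM ler_nat.
Qed.

Lemma pfactor_ratio_le_lam p n e : prime p -> (0 < e)%N -> (e <= p ^ n)%N ->
    (forall r, prime r -> r %| e -> p <= r)%N ->
  (e%:R / (p ^ n)%:R : rat) <= Num.min 1 ((lam e)%:R / (lam (p ^ n))%:R).
Proof.
move=> p_pr e_gt0 e_le minp.
have p_gt0 := prime_gt0 p_pr.
apply: ratio_le_min; rewrite ?lam_gt0 ?expn_gt0 ?p_gt0 //.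
case: n e_le => [|n] e_le.
  by have -> : e = 1%N by lia.
rewrite lam_pfactor //; have [e_gt1|] := ltnP 1 e.
  by rewrite mulnC leq_mul // lam_ge.
move=> e_le1; have -> : e = 1%N by lia.
by rewrite mul1n /lam /= mul1n expnS leq_pmulr ?expn_gt0 ?p_gt0.
Qed.

Lemma pow2_ratio j j' : exists i : int, ((2 ^ j)%:R : rat) = 2 ^ i * (2 ^ j')%:R.
Proof.
exists (j%:Z - j'%:Z); rewrite !natrX !exprnP -expfzDr ?pnatr_eq0 //.
by rewrite subrK.
Qed.

Lemma odd_pow2_ratio_eq x y (i : int) : odd x -> odd y ->
  (x%:R : rat) = 2 ^ i * y%:R -> x = y.
Proof.
move=> x_odd y_odd; case: i => n; rewrite ?NegzE -?exprnP => E.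
  have {}E : x = (2 ^ n * y)%N by apply/eqP; rewrite -(eqr_nat rat) natrM natrX E.
  by case: n E x_odd => [|n] ->; rewrite ?mul1n // oddM oddX.
have {}E : (x * 2 ^ n.+1)%N = y.
  apply/eqP; rewrite -(eqr_nat rat) natrM natrX E -exprnN mulrAC mulVf ?mul1r //.
  by rewrite expf_neq0 ?pnatr_eq0.
by move: y_odd; rewrite -E oddM oddX andbF.
Qed.

Lemma odd_dvd_of_prime_factors_gt2 p m d : (2 < p)%N ->
  (forall r, prime r -> r %| m -> p <= r)%N -> (d %| m)%N -> odd d.
Proof.
move=> p_gt2 minp d_m; apply: contraTT p_gt2; rewrite -dvdn2 -leqNgt => two_d.
exact: minp (dvdn_trans two_d d_m).
Qed.

Lemma reduces_pfactor p a m (g : nat -> nat) :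
    prime p -> (0 < m)%N -> (forall r, prime r -> r %| m -> p <= r)%N ->
    (forall j, j <= a -> g j %| m)%N ->
    (forall j, j <= a -> g j <= p ^ j)%N ->
    (forall j, j <= a -> m <= p ^ (a - j) * g j)%N ->
    (forall j j', j <= a -> j' <= a -> g j = g j' -> j = j')%N ->
  reduces (p ^ a) m.
Proof.
move=> p_pr m_gt0 minp g_dvd g_le g_ge g_inj.
have p_gt0 := prime_gt0 p_pr.
exists (fun d => g (logn p d)); split; [|split; [|split]].
- by move=> _ /(dvdn_pfactor _ _ p_pr)[j ja ->]; rewrite pfactorK // g_dvd.
- by move=> _ /(dvdn_pfactor _ _ p_pr)[j ja ->]; rewrite pfactorK // g_le.
- move=> _ /(dvdn_pfactor _ _ p_pr)[j ja ->]; rewrite pfactorK // -expnB //.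
  have gj_m := g_dvd j ja; have gj_gt0 := dvdn_gt0 m_gt0 gj_m.
  apply: pfactor_ratio_le_lam => //.
  + by rewrite divn_gt0 // dvdn_leq.
  + by rewrite leq_divLR // g_ge.
  + move=> r r_pr r_div; apply: minp => //.
    by rewrite -(divnK gj_m) dvdn_mulr.
- move=> _ _ /(dvdn_pfactor _ _ p_pr)[j ja ->] /(dvdn_pfactor _ _ p_pr)[j' ja' ->].
  rewrite !pfactorK // => -[i E].
  have [->|p_neq2] := eqVneq p 2; first exact: pow2_ratio.
  have p_gt2 : (2 < p)%N by rewrite ltn_neqAle eq_sym p_neq2 prime_gt1.
  have odd_g k : (k <= a)%N -> odd (g k).
    by move=> ka; apply: odd_dvd_of_prime_factors_gt2 p_gt2 minp (g_dvd k ka).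
  exists 0; rewrite expr0z mul1r (g_inj j j') //.
  exact: odd_pow2_ratio_eq (odd_g j ja) (odd_g j' ja') E.
Qed.

Lemma pow_gt_mul p a X : (0 < p)%N -> pow_gt p a X -> (p ^ 2 * X < p ^ a)%N.
Proof.
rewrite /pow_gt => p_gt0 X_lt; rewrite -(ltr_nat rat) natrM !natrX.
have -> : (p%:R ^+ a = p%:R ^ (a%:Z - 2) * p%:R ^+ 2 :> rat)%R.
  by rewrite !exprnP -expfzDr ?pnatr_eq0 -?lt0n // subrK.
by rewrite mulrC ltr_pM2r // exprn_gt0 // ltr0n.
Qed.

Local Close Scope ring_scope.

Lemma prime_coprime_gt0 p x : prime p -> coprime p x -> 0 < x.
Proof.
by move=> p_pr; apply: contraTT; rewrite -eqn0Ngt => /eqP->; rewrite prime_coprime ?dvdn0.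
Qed.

Lemma pfactor_coprime_inj p e e' x x' : prime p -> coprime p x -> coprime p x' ->
  p ^ e * x = p ^ e' * x' -> e = e' /\ x = x'.
Proof.
move=> p_pr cx cx' E; have p_gt0 := prime_gt0 p_pr.
have logn_pM n y : coprime p y -> logn p (p ^ n * y) = n.
  move=> cy; have y_gt0 := prime_coprime_gt0 p_pr cy.
  rewrite lognM ?expn_gt0 ?p_gt0 //.
  by rewrite pfactorK // logn_coprime // addn0.
have ee' : e = e' by rewrite -(logn_pM e x cx) -(logn_pM e' x' cx') E.
by split=> //; apply/eqP; rewrite -(@eqn_pmul2l (p ^ e)) ?expn_gt0 ?p_gt0 // E ee'.
Qed.

Section DivisorChain.

Variables (p a b k : nat) (D C : nat -> nat).
Hypothesis p_prime : prime p.
Hypothesis coprime_D : forall l, l <= k -> coprime p (D l).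
Hypothesis D_inj : forall l l', l <= k -> l' <= k -> D l = D l' -> l = l'.
Hypothesis D_dvd : forall l, l <= k -> D l %| D k.
Hypothesis C0 : C 0 = 0.
Hypothesis C_step : forall l, l < k -> C l.+1 <= C l + b + 1.
Hypothesis a_le_Ck_b : a <= C k + b.
Hypothesis D_le_pC : forall l, l <= k -> D l <= p ^ C l.
Hypothesis pC_D_le : forall l, l <= k -> p ^ (b + C l) * D k <= p ^ a * D l.
Hypothesis D_prime_ge : forall r, prime r -> r %| D k -> p <= r.

Definition chain_level j := \max_(l < k.+1 | C l <= j) l.

Lemma chain_level_le j : chain_level j <= k.
Proof. by apply/bigmax_leqP => l _; rewrite -ltnS. Qed.

Lemma C_chain_level_le j : C (chain_level j) <= j.
Proof.
have C0j : C (@ord0 k) <= j by rewrite C0.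
(* Order.TTheory shadows the nat version of bigmax_eq_arg. *)
by rewrite /chain_level (bigop.bigmax_eq_arg ord0 C0j); case: arg_maxnP.
Qed.

Lemma chain_level_max j l : l <= k -> C l <= j -> l <= chain_level j.
Proof. by rewrite -ltnS => lk Clj; apply: (leq_bigmax_cond (Ordinal lk)). Qed.

Lemma le_C_chain_level j : j <= a -> j <= C (chain_level j) + b.
Proof.
move=> ja; have [lk|] := ltnP (chain_level j) k; last first.
  move=> kl; have -> : chain_level j = k.
    by apply/eqP; rewrite eqn_leq chain_level_le.
  exact: leq_trans ja a_le_Ck_b.
have : ~~ (C (chain_level j).+1 <= j).
  by apply/negP => /(chain_level_max lk); rewrite ltnn.
by rewrite -ltnNge => /leq_trans /(_ (C_step lk)); rewrite addn1.
Qed.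

Definition chain j := p ^ (j - C (chain_level j)) * D (chain_level j).

Lemma chain_dvd j : j <= a -> chain j %| p ^ b * D k.
Proof.
move=> ja; apply: dvdn_mul; last exact: D_dvd (chain_level_le j).
by rewrite dvdn_exp2l // leq_subLR le_C_chain_level.
Qed.

Lemma chain_le j : chain j <= p ^ j.
Proof.
rewrite /chain -[X in _ <= p ^ X](subnK (C_chain_level_le j)) expnD leq_mul2l.
by rewrite D_le_pC ?chain_level_le ?orbT.
Qed.

Lemma chain_ge j : j <= a -> p ^ b * D k <= p ^ (a - j) * chain j.
Proof.
move=> ja; have Cj := C_chain_level_le j; rewrite /chain mulnA -expnD.
have -> : a - j + (j - C (chain_level j)) = a - C (chain_level j) by lia.
rewrite -(@leq_pmul2r (p ^ C (chain_level j))) ?expn_gt0 ?prime_gt0 //.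
rewrite !(mulnAC _ (D _)) -!expnD subnK ?(leq_trans Cj ja) //.
exact: pC_D_le (chain_level_le j).
Qed.

Lemma chain_inj : injective chain.
Proof.
move=> j j' E; have cD i : coprime p (D (chain_level i)) := coprime_D (chain_level_le i).
have [ee' /(D_inj (chain_level_le j) (chain_level_le j')) ll'] :=
  pfactor_coprime_inj p_prime (cD j) (cD j') E.
by move: ee' (C_chain_level_le j) (C_chain_level_le j'); rewrite ll'; lia.
Qed.

Lemma reduces_chain : reduces (p ^ a) (p ^ b * D k).
Proof.
have p_gt0 := prime_gt0 p_prime.
apply: (@reduces_pfactor _ _ _ chain) => //.
- by rewrite muln_gt0 expn_gt0 p_gt0 (prime_coprime_gt0 p_prime (coprime_D (leqnn k))).
- move=> r r_pr; rewrite Euclid_dvdM // Euclid_dvdX // => /orP[/andP[rp _]|].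
    by move: rp; rewrite dvdn_prime2 // => /eqP->.
  exact: D_prime_ge.
- exact: chain_dvd.
- by move=> j _; apply: chain_le.
- exact: chain_ge.
- by move=> j j' _ _; apply: chain_inj.
Qed.

End DivisorChain.

Lemma prime_dvd_prod_ord r l (q : nat -> nat) :
  prime r -> r %| \prod_(i < l) q i -> exists2 i, i < l & r %| q i.
Proof.
move=> r_pr; elim: l => [|l IHl].
  by rewrite big_ord0 dvdn1 => /eqP r1; rewrite r1 in r_pr.
rewrite big_ord_recr /= Euclid_dvdM // => /orP[/IHl[i il ri] | rl]; last by exists l.
by exists i; first exact: ltnW.
Qed.

Lemma expn_up_log_le p n : 1 < p -> 0 < n -> p ^ up_log p n <= p * n.
Proof.
move=> p_gt1; rewrite leq_eqVlt => /orP[/eqP<- | n_gt1].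
  by rewrite up_log1 muln1 ltnW.
rewrite -(prednK (_ : 0 < up_log p n)) ?up_log_gt0 ?p_gt1 // expnS leq_mul2l.
by rewrite ltnW ?orbT // up_log_gtn.
Qed.

Section PrefixProducts.

Variables (k p a b : nat) (q : nat -> nat).
Hypothesis k_gt0 : 0 < k.
Hypothesis p_prime : prime p.
Hypothesis q_prime : forall i, i < k -> prime (q i).
Hypothesis p_lt_q : forall i, i < k -> p < q i.
Hypothesis q_le_last : forall i, i < k -> q i <= q k.-1.

Let Q l := \prod_(i < l) q i.

Hypothesis Q_lb : p ^ (2 * b) * Q k.-1 <= p ^ a.
Hypothesis Q_ub : p ^ a < p ^ (2 * b.+1) * Q k.-1.
Hypothesis a_big : p ^ 2 * (Q k.-1 * q k.-1 ^ 2) < p ^ a.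

Let p_gt1 : 1 < p := prime_gt1 p_prime.
Let p_gt0 : 0 < p := prime_gt0 p_prime.

Lemma Q_succ l : Q l.+1 = Q l * q l.
Proof. by rewrite /Q big_ord_recr. Qed.

Lemma Q_last : Q k = Q k.-1 * q k.-1.
Proof. by rewrite -Q_succ prednK. Qed.

Lemma prime_dvd_Q_gt r l : l <= k -> prime r -> r %| Q l -> p < r.
Proof.
move=> lk r_pr /(prime_dvd_prod_ord r_pr)[i il].
have ik := leq_trans il lk.
by rewrite dvdn_prime2 ?q_prime // => /eqP->; apply: p_lt_q.
Qed.

Lemma coprime_Q l : l <= k -> coprime p (Q l).
Proof.
move=> lk; rewrite prime_coprime //.
by apply/negP => /(prime_dvd_Q_gt lk p_prime); rewrite ltnn.
Qed.

Lemma Q_gt0 l : l <= k -> 0 < Q l.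
Proof. by move=> lk; apply: prime_coprime_gt0 p_prime (coprime_Q lk). Qed.

Lemma Q_lt l l' : l < l' -> l' <= k -> Q l < Q l'.
Proof.
elim: l' => // l' IHl'; rewrite ltnS => ll' l'k.
have Q_ltS : Q l' < Q l'.+1.
  by rewrite Q_succ ltn_Pmulr ?(prime_gt1 (q_prime l'k)) ?(Q_gt0 (ltnW l'k)).
move: ll'; rewrite leq_eqVlt => /orP[/eqP-> // | ll'].
exact: ltn_trans (IHl' ll' (ltnW l'k)) Q_ltS.
Qed.

Lemma Q_inj l l' : l <= k -> l' <= k -> Q l = Q l' -> l = l'.
Proof.
move=> lk l'k E; case: (ltngtP l l') => // [ll'|l'l].
  by have := Q_lt ll' l'k; rewrite E ltnn.
by have := Q_lt l'l lk; rewrite E ltnn.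
Qed.

Lemma Q_dvd l : l <= k -> Q l %| Q k.
Proof.
move=> lk; rewrite /Q (big_ord_widen _ q lk).
by rewrite [X in _ %| X](bigID (fun i : 'I_k => i < l)) dvdn_mulr.
Qed.

Lemma b_le_a : b <= a.
Proof.
have : p ^ (2 * b) <= p ^ a.
  by apply: leq_trans Q_lb; rewrite leq_pmulr ?Q_gt0 ?leq_pred.
by rewrite leq_exp2l // => /(leq_trans _)->//; rewrite leq_pmull.
Qed.

Lemma last_lt_pb : q k.-1 < p ^ b.
Proof.
have := ltn_trans a_big Q_ub.
have -> : p ^ (2 * b.+1) * Q k.-1 = p ^ 2 * (Q k.-1 * (p ^ b) ^ 2).
  by rewrite mulnS expnD (mulnC 2 b) expnM; ring.
by rewrite ltn_pmul2l ?expn_gt0 ?p_gt0 // ltn_pmul2l ?Q_gt0 ?leq_pred // ltn_sqr.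
Qed.

Lemma pb_Q_lt : p ^ b.+1 * Q k < p ^ a.
Proof.
rewrite -ltn_sqr Q_last.
have -> : (p ^ b.+1 * (Q k.-1 * q k.-1)) ^ 2 =
          p ^ (2 * b) * Q k.-1 * (p ^ 2 * (Q k.-1 * q k.-1 ^ 2)).
  by rewrite [p ^ b.+1]expnS (mulnC 2 b) expnM; ring.
rewrite -mulnn; apply: leq_ltn_trans (leq_mul Q_lb (leqnn _)) _.
by rewrite ltn_pmul2l ?expn_gt0 ?p_gt0.
Qed.

Let C l := if l < k then up_log p (Q l) else a - b.

Lemma C_step l : l < k -> C l.+1 <= C l + b + 1.
Proof.
rewrite /C => lk; rewrite lk; case: ltnP => [lk' | kl].
  apply: leq_trans (leq_addr 1 _); apply: up_log_min => //.
  rewrite Q_succ expnD leq_mul ?up_logP // ltnW //.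
  exact: leq_ltn_trans (q_le_last (ltnW lk')) last_lt_pb.
have -> : l = k.-1 by lia.
rewrite leq_subLR -ltnS -(ltn_exp2l _ _ p_gt1); apply: leq_trans Q_ub _.
have -> : (b + (up_log p (Q k.-1) + b + 1)).+1 = 2 * b.+1 + up_log p (Q k.-1).
  by lia.
by rewrite expnD leq_mul2l up_logP ?orbT.
Qed.

Lemma Q_le_pC l : l <= k -> Q l <= p ^ C l.
Proof.
rewrite /C leq_eqVlt => /orP[/eqP-> | ->]; last exact: up_logP.
rewrite ltnn -(@leq_pmul2l (p ^ b)) ?expn_gt0 ?p_gt0 // -expnD subnKC ?b_le_a //.
by apply: ltnW; apply: leq_ltn_trans pb_Q_lt; rewrite leq_mul2r leq_pexp2l ?orbT.
Qed.

Lemma pC_Q_le l : l <= k -> p ^ (b + C l) * Q k <= p ^ a * Q l.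
Proof.
rewrite /C leq_eqVlt => /orP[/eqP-> | lk]; first by rewrite ltnn subnKC ?b_le_a.
rewrite lk expnD mulnAC.
apply: leq_trans (leq_mul (leqnn _) (expn_up_log_le p_gt1 (Q_gt0 (ltnW lk)))) _.
by rewrite mulnA leq_mul2r -mulnA (mulnC _ p) mulnA -expnSr ltnW ?orbT // pb_Q_lt.
Qed.

Lemma reduces_prefix_products : reduces (p ^ a) (p ^ b * Q k).
Proof.
apply: (reduces_chain (C := C)) => //.
- exact: coprime_Q.
- exact: Q_inj.
- exact: Q_dvd.
- by rewrite /C k_gt0 /Q big_ord0 up_log1.
- exact: C_step.
- by rewrite /C ltnn subnK ?b_le_a.
- exact: Q_le_pC.
- exact: pC_Q_le.
- by move=> r r_pr /(prime_dvd_Q_gt (leqnn k) r_pr)/ltnW.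
Qed.

End PrefixProducts.

Lemma homo_leq_prefix (f : nat -> nat) k :
  (forall i, i.+1 < k -> f i < f i.+1) ->
  {in [pred i | i < k] &, {homo f : i j / i <= j}}.
Proof.
move=> f_inc; apply: homo_leq_in => [//|x y z|i j /[!inE] _ jk m /andP[_ mj]|i].
- exact: leq_trans.
- exact: ltn_trans mj jk.
- by rewrite !inE => _ ik; apply: ltnW (f_inc i ik).
Qed.

Lemma trunc_log_quot_bounds p N P : 1 < p -> 0 < P -> P <= N ->
  let b := trunc_log (p ^ 2) (N %/ P) in
  p ^ (2 * b) * P <= N < p ^ (2 * b.+1) * P.
Proof.
move=> p_gt1 P_gt0 P_le /=.
have p2_gt1 : 1 < p ^ 2 by rewrite (ltn_trans p_gt1) // -{1}(expn1 p) ltn_exp2l.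
have quot_gt0 : 0 < N %/ P by rewrite divn_gt0.
by have := trunc_log_bounds p2_gt1 quot_gt0; rewrite /= !expnM leq_divRL ?ltn_divLR.
Qed.

Theorem lemma3p9 (k : nat) (p a : nat) (q : nat -> nat) :
  (1 <= k)%N ->
  prime p ->
  (forall i, (i < k)%N -> prime (q i)) ->
  (p < q 0)%N ->
  (forall i, (i.+1 < k)%N -> (q i < q i.+1)%N) ->
  (1 <= a)%N ->
  pow_gt p a ((\prod_(i < k.-1) q i) * (q k.-1) ^ 2)%N ->
  Z.le 0 (bexp a p (\prod_(i < k.-1) q i)) /\
  reduces (p ^ a)
    (p ^ Z.to_nat (bexp a p (\prod_(i < k.-1) q i)) * \prod_(i < k) q i)%N.
Proof.
move=> k_gt0 p_pr q_pr p_lt_q0 q_inc _ a_big.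
have p_gt1 := prime_gt1 p_pr; have kk : k.-1 < k by rewrite prednK.
have q_homo := homo_leq_prefix q_inc.
have p_lt_q i : i < k -> p < q i.
  by move=> ik; apply: leq_trans p_lt_q0 (q_homo 0 i k_gt0 ik _).
have q_le_last i : i < k -> q i <= q k.-1.
  by move=> ik; apply: q_homo; rewrite // -ltnS prednK.
set P := \prod_(i < k.-1) q i in a_big *.
have P_gt0 : 0 < P.
  by rewrite prodn_gt0 // => i; rewrite prime_gt0 ?q_pr ?(ltn_trans _ kk).
have {}a_big := pow_gt_mul (ltnW p_gt1) a_big.
have P_le : P <= p ^ a.
  apply/ltnW/(leq_ltn_trans _ a_big); rewrite mulnCA leq_pmulr //.
  by rewrite muln_gt0 !expn_gt0 ltnW // prime_gt0 ?q_pr.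
have /andP[lb ub] := trunc_log_quot_bounds p_gt1 P_gt0 P_le.
rewrite (bexp_eq p_gt1 P_gt0 lb ub) Nat2Z.id; split; first exact: Nat2Z.is_nonneg.
exact: reduces_prefix_products.
Qed.
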